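(* Let $p$ be a prime, $q=p^e$, $m,k\ge1$, and let $d$ be an integer with $0<d\le k(q^m-1)$. Then there exists a homogeneous polynomial $f\in\mathbb{F}_{q^m}[x_1,\dots,x_k]$ of degree $d$ such that $\nu_p\big(N(f=y^q-y)\big)\le em\lceil k/d\rceil$.
   Context: $N(f=y^q-y)$ denotes the number of $(x_1,\dots,x_k,y)\in\mathbb{F}_{q^m}^{k+1}$ with $f(x_1,\dots,x_k)=y^q-y$; $\nu_p$ is the $p$-adic valuation. *)

From mathcomp Require Import all_boot all_order all_algebra all_field.
From mathcomp Require Import mpoly.
Set Implicit Arguments. Unset Strict Implicit. Unset Printing Implicit Defensive.
Import GRing.Theory.
Local Open Scope ring_scope.

Definition Nfy (F : finFieldType) (k q : nat) (f : {mpoly F[k]}) : nat :=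
  #|[set xy : {ffun 'I_k -> F} * F |
       f.@[fun i => xy.1 i] == xy.2 ^+ q - xy.2]|.

Definition ceildiv (a b : nat) : nat := ((a + b - 1) %/ b)%N.

From mathcomp Require Import all_boot all_order all_algebra all_field.
From mathcomp Require Import mpoly.
From mathcomp Require Import ring zify.
Set Implicit Arguments. Unset Strict Implicit. Unset Printing Implicit Defensive.
Import GRing.Theory.

(* Write Q = #|F| and psi y = y^q - y; psi is additive, so its nonempty fibres
   all have the size n0 of its kernel, a power of p larger than 1, and
   N(f) is the sum over x of the size of the fibre of psi over f(x).
   Take f = sum_(a in A) x_a R_a, where each R_a is a monomial in a set S_a of
   "follower" variables, the S_a being pairwise disjoint and free of the
   "leaders" x_a.  At a point where some R_a does not vanish, f is affine and
   nonconstant in the first such leader, so these points contribute one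
   solution each on average; at the C points where all R_a vanish, f = 0 and
   each contributes n0.  Hence N(f) = Q^k + (n0 - 1) C, where
   C Q^s = Q^k prod_a (Q^|S_a| - (Q - 1)^|S_a|) with s = sum_a |S_a|, and as
   p divides neither n0 - 1 nor any factor of the product,
   v_p(N(f)) = em (k - s).  Cutting x_1, ..., x_k into consecutive blocks of
   length d, each block led by its first variable, leaves k - s <= ceil(k/d).
   For d = 1 take f = x_1, with N(f) = Q^k; for k = 1 take f = c x^d, where
   c is chosen with N(f) <= Q, which is possible because the average of
   N(c x^d) over c <> 0 is exactly Q. *)

Lemma card_neq (T : finType) (x : T) : #|(fun y => y != x)| = (#|T| - 1)%N.
Proof. by rewrite subn1 -(cardC1 x); apply: eq_card. Qed.

Section CoordinateUpdate.
Variables (T : finType) (k : nat).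
Local Notation X := {ffun 'I_k -> T}.

Definition upd (x : X) (i : 'I_k) (c : T) : X :=
  [ffun j => if j == i then c else x j].

Lemma upd_same x i c : upd x i c i = c.
Proof. by rewrite ffunE eqxx. Qed.

Lemma upd_other x i c j : j != i -> upd x i c j = x j.
Proof. by rewrite ffunE => /negPf ->. Qed.

Lemma upd_id x i : upd x i (x i) = x.
Proof. by apply/ffunP => j; rewrite ffunE; case: eqP => // ->. Qed.

Lemma upd_upd x i c c' : upd (upd x i c) i c' = upd x i c'.
Proof. by apply/ffunP => j; rewrite !ffunE; case: eqP. Qed.

Definition invariant_at (P : pred X) (i : 'I_k) := forall x c, P (upd x i c) = P x.

Lemma invariant_atT i : invariant_at predT i.
Proof. by []. Qed.

Lemma invariant_atI (P Q : pred X) i :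
  invariant_at P i -> invariant_at Q i -> invariant_at (predI P Q) i.
Proof. by move=> HP HQ x c; rewrite /= HP HQ. Qed.

Lemma invariant_at_local (Q : pred X) (L : {pred 'I_k}) i :
  (forall x y : X, {in L, x =1 y} -> Q x = Q y) -> i \notin L -> invariant_at Q i.
Proof.
move=> HQ iL x c; apply: HQ => l lL.
by rewrite upd_other //; apply: contraNneq iL => <-.
Qed.

Lemma sum_upd (P : pred X) i (G : X -> nat) : invariant_at P i ->
  (\sum_(x | P x) \sum_c G (upd x i c) = #|T| * \sum_(x | P x) G x)%N.
Proof.
move=> HP; pose h (xc : X * T) := (upd xc.1 i xc.2, xc.1 i).
have hK : involutive h by move=> [x c]; rewrite /h /= upd_upd upd_id upd_same.
rewrite pair_big_dep (reindex_inj (inv_inj hK)) /=.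
transitivity (\sum_(x | P x) \sum_(c : T) G x).
  by rewrite pair_big_dep; apply: eq_big => [[x c]|[x c] _] /=;
    rewrite ?HP ?andbT ?upd_upd ?upd_id.
rewrite big_distrr; apply: eq_bigr => x _.
by rewrite sum_nat_const cardT -cardE.
Qed.

Lemma card_set_sum (P Q : pred X) :
  #|[set x | P x & Q x]| = (\sum_(x | P x) (Q x : nat))%N.
Proof. by rewrite -big_mkcondr sum1dep_card; apply: eq_card => x; rewrite inE. Qed.

Lemma card_set_split (P Q : pred X) :
  (#|[set x | P x & Q x]| + #|[set x | P x & ~~ Q x]| = #|[set x | P x]|)%N.
Proof.
rewrite !card_set_sum -big_split -sum1dep_card /=.
by apply: eq_bigr => x _; rewrite addnC addn_negb.
Qed.

Variable c0 : T.

Lemma card_upd_neq (P : pred X) i : invariant_at P i ->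
  (#|T| * #|[set x | P x & x i != c0]| = (#|T| - 1) * #|[set x | P x]|)%N.
Proof.
move=> HP; rewrite card_set_sum -(sum_upd _ HP).
have -> : #|[set x | P x]| = #|[set x | P x & true]|.
  by apply: eq_card => x; rewrite !inE andbT.
rewrite card_set_sum big_distrr /=; apply: eq_bigr => x _.
under eq_bigr do rewrite upd_same.
rewrite muln1 -big_mkcond sum1dep_card /= -(card_neq c0).
by apply: eq_card => c; rewrite inE.
Qed.

Lemma card_all_neq (L : seq 'I_k) (P : pred X) :
  uniq L -> {in L, forall i, invariant_at P i} ->
  (#|T| ^ size L * #|[set x | P x & all (fun i => x i != c0) L]|
   = (#|T| - 1) ^ size L * #|[set x | P x]|)%N.
Proof.
elim: L P => [|i L IH] P /=.
  by move=> _ _; rewrite !mul1n; apply: eq_card => x; rewrite !inE andbT.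
case/andP=> iL uL HP.
pose P' x := P x && (x i != c0).
have HP' : {in L, forall j, invariant_at P' j}.
  move=> j jL; apply: invariant_atI; first by apply: HP; rewrite inE jL orbT.
  apply: (@invariant_at_local _ (pred1 i)).
    by move=> x y /(_ i); rewrite inE eqxx => ->.
  by rewrite inE; apply: contraNneq iL => <-.
have -> : #|[set x | P x & (x i != c0) && all (fun i => x i != c0) L]|
        = #|[set x | P' x & all (fun i => x i != c0) L]|.
  by apply: eq_card => x; rewrite !inE andbA.
rewrite expnS -mulnA IH // mulnCA.
have -> : #|[set x | P' x]| = #|[set x | P x & x i != c0]| by [].
by rewrite card_upd_neq ?mulnA -?expnSr //; apply: HP; rewrite inE eqxx.
Qed.

Lemma card_exists_eq (B : {set 'I_k}) (P : pred X) :
  {in B, forall i, invariant_at P i} ->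
  (#|T| ^ #|B| * #|[set x | P x & [exists l in B, x l == c0]]|
   = (#|T| ^ #|B| - (#|T| - 1) ^ #|B|) * #|[set x | P x]|)%N.
Proof.
move=> HP.
have HL : {in enum B, forall i, invariant_at P i} by move=> i; rewrite mem_enum; apply: HP.
have := card_all_neq (enum_uniq B) HL; rewrite -cardE.
have -> : #|[set x | P x & all (fun i => x i != c0) (enum B)]|
        = #|[set x | P x & ~~ [exists l in B, x l == c0]]|.
  apply: eq_card => x; rewrite !inE; congr (_ && _).
  apply/allP/existsPn => H l; last by rewrite mem_enum => lB; move: (H l); rewrite lB.
  by rewrite negb_and -implybE; apply/implyP => lB; apply: H; rewrite mem_enum.
move=> E; rewrite mulnBl -E -(card_set_split P (fun x => [exists l in B, x l == c0])).
by rewrite mulnDr addnK.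
Qed.

Lemma card_blocks (I : eqType) (r : seq I) (B : I -> {set 'I_k}) (P : pred X) :
  uniq r -> {in r &, forall i j, i != j -> [disjoint B i & B j]} ->
  (forall i l, i \in r -> l \in B i -> invariant_at P l) ->
  (#|T| ^ (\sum_(i <- r) #|B i|)
     * #|[set x | P x & all (fun i => [exists l in B i, x l == c0]) r]|
   = (\prod_(i <- r) (#|T| ^ #|B i| - (#|T| - 1) ^ #|B i|)) * #|[set x | P x]|)%N.
Proof.
elim: r P => [|i r IH] P /=.
  by move=> _ _ _; rewrite !big_nil !mul1n; apply: eq_card => x; rewrite !inE andbT.
case/andP=> ir ur disB HP.
pose P' x := P x && [exists l in B i, x l == c0].
have HP' j l : j \in r -> l \in B j -> invariant_at P' l.
  move=> jr lBj; apply: invariant_atI; first by apply: (HP j); rewrite // inE jr orbT.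
  apply: (@invariant_at_local _ (B i)).
    by move=> x y xy; apply: eq_existsb => l'; case: (boolP (l' \in B i)) => // /xy ->.
  have ij : i != j by apply: contraNneq ir => ->.
  have := disB i j; rewrite !inE eqxx jr orbT => /(_ isT isT ij) /disjointFl.
  by move/(_ l lBj) => ->.
have -> : #|[set x | P x & [exists l in B i, x l == c0]
                          && all (fun i => [exists l in B i, x l == c0]) r]|
        = #|[set x | P' x & all (fun i => [exists l in B i, x l == c0]) r]|.
  by apply: eq_card => x; rewrite !inE andbA.
rewrite !big_cons expnD -mulnA IH //; last first.
  by move=> j j' jr j'r; apply: disB; rewrite inE ?jr ?j'r orbT.
rewrite mulnCA card_exists_eq ?mulnA 1?[(\prod_(j <- r) _ * _)%N]mulnC //.
by move=> l lBi; apply: (HP i); rewrite ?inE ?eqxx.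
Qed.
End CoordinateUpdate.

Local Open Scope ring_scope.

Section FibreCounts.
Variables (F : finFieldType) (k : nat) (psi : F -> F).
Local Notation X := {ffun 'I_k -> F}.

Definition nfib (t : F) : nat := #|[set y | psi y == t]|.

Lemma sum_nfib_inj (h : F -> F) : injective h -> (\sum_c nfib (h c) = #|F|)%N.
Proof.
move=> h_inj; rewrite -(reindex_inj h_inj (P := predT) (F := nfib)) -sum1_card.
rewrite [RHS](partition_big psi predT) //=; apply: eq_bigr => t _.
by rewrite /nfib -sum1dep_card.
Qed.

Lemma sum_nfib_coord i : (\sum_(x : X) nfib (x i) = #|F| ^ k)%N.
Proof.
have F0 : (0 < #|F|)%N by apply/card_gt0P; exists 0.
apply/eqP; rewrite -(eqn_pmul2l F0) -(@sum_upd _ _ predT i) //; apply/eqP.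
rewrite (eq_bigr (fun _ => #|F|)) => [|x _].
  by rewrite sum_nat_const cardT -cardE card_ffun card_ord mulnC.
rewrite -[RHS](sum_nfib_inj (@inj_id F)); apply: eq_bigr => c _.
by rewrite ffunE eqxx.
Qed.

Lemma sum_nfib_scale (w : F) :
  (\sum_(c : F | c != 0%R) nfib (c * w)%R
   = if w == 0%R then (#|F| - 1) * nfib 0%R else #|F| - nfib 0%R)%N.
Proof.
case: eqP => [->|/eqP w0].
  under eq_bigr do rewrite mulr0.
  by rewrite sum_nat_const card_neq.
by rewrite -(sum_nfib_inj (mulIf w0)) [in RHS](bigD1 0) //= mul0r addKn.
Qed.

Variables (A : {set 'I_k}) (R : 'I_k -> X -> F).
Hypothesis R_upd : {in A &, forall a b x c, R a (upd x b c) = R a x}.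

Definition leader_form (x : X) : F := \sum_(a in A) x a * R a x.

Lemma leader_form_upd a x c : a \in A ->
  leader_form (upd x a c) = leader_form x + (c - x a) * R a x.
Proof.
move=> aA; rewrite /leader_form !(bigD1 a aA) /= upd_same R_upd //.
rewrite (eq_bigr (fun b => x b * R b x)); first by ring.
by move=> b /andP[bA ba]; rewrite upd_other // R_upd.
Qed.

Definition first_leader (x : X) : option 'I_k := [pick a in A | R a x != 0].

Lemma first_leader_upd a x c : a \in A -> first_leader (upd x a c) = first_leader x.
Proof.
move=> aA; apply: eq_pick => b /=.
by case: (boolP (b \in A)) => //= bA; rewrite R_upd.
Qed.

Lemma first_leaderPn x : (first_leader x == None) = [forall a in A, R a x == 0].
Proof.
rewrite /first_leader; case: pickP => [a /andP[aA Rax]|H] /=.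
  by apply/esym/forall_inP => /(_ a aA); apply/negP.
by apply/esym/forall_inP => a aA; move: (H a); rewrite aA => /negbFE.
Qed.

Lemma sum_nfib_leader_class a :
  (\sum_(x | first_leader x == Some a) nfib (leader_form x)
   = #|[set x | first_leader x == Some a]|)%N.
Proof.
case: (boolP (a \in A)) => aA; last first.
  have none x : (first_leader x == Some a) = false.
    apply/negbTE; rewrite /first_leader; case: pickP => // b /andP[bA _].
    by apply: contraNneq aA => -[<-].
  by rewrite big_pred0 // eq_card0 // => x; rewrite inE none.
have Ha x : first_leader x == Some a -> R a x != 0.
  by rewrite /first_leader; case: pickP => // b /andP[_ Rbx] /eqP[<-].
(* Average over [x a]: on this class, [c |-> leader_form (upd x a c)] is a bijection. *)
have F0 : (0 < #|F|)%N by apply/card_gt0P; exists 0.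
apply/eqP; rewrite -(eqn_pmul2l F0); apply/eqP.
rewrite -(@sum_upd _ _ _ a); last by move=> x c; rewrite first_leader_upd.
rewrite -sum1dep_card big_distrr /=; apply: eq_bigr => x /Ha Rax.
under eq_bigr do rewrite leader_form_upd //.
by rewrite sum_nfib_inj ?muln1 // => c1 c2 /addrI /(mulIf Rax) /subIr.
Qed.

Theorem sum_nfib_leader_form :
  (\sum_x nfib (leader_form x) + #|[set x | [forall a in A, R a x == 0%R]]|
   = #|F| ^ k + nfib 0%R * #|[set x | [forall a in A, R a x == 0%R]]|)%N.
Proof.
pose w x := if first_leader x is None then nfib 0 else 1%N.
have -> : #|[set x | [forall a in A, R a x == 0]]| = #|[set x | first_leader x == None]|.
  by apply: eq_card => x; rewrite !inE first_leaderPn.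
have -> : (\sum_x nfib (leader_form x) = \sum_x w x)%N.
  rewrite !(partition_big first_leader predT) //=; apply: eq_bigr => -[a|] _.
    rewrite sum_nfib_leader_class -sum1dep_card /w.
    by apply: eq_bigr => x; case: (first_leader x).
  apply: eq_bigr => x Hx; rewrite /w (eqP Hx) /leader_form big1 // => a aA.
  by move: Hx; rewrite first_leaderPn => /forall_inP/(_ a aA)/eqP ->; rewrite mulr0.
rewrite (bigID (fun x => first_leader x == None)) /=.
have -> : (\sum_(x | first_leader x == None) w x
           = nfib 0%R * #|[set x | first_leader x == None]|)%N.
  by rewrite -sum1dep_card big_distrr; apply: eq_bigr => x Hx; rewrite /w (eqP Hx) /= muln1.
have -> : (\sum_(x | first_leader x != None) w x = #|[set x | first_leader x != None]|)%N.
  by rewrite -sum1dep_card; apply: eq_bigr => x; rewrite /w; case: (first_leader x).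
have <- : (#|[set x | first_leader x == None]| + #|[set x | first_leader x != None]|
           = #|F| ^ k)%N.
  rewrite -[in RHS](card_ord k) -card_ffun -(cardsC [set x | first_leader x == None]).
  by congr (_ + _)%N; apply: eq_card => x; rewrite !inE.
set C := #|[set x | first_leader x == None]|; lia.
Qed.
End FibreCounts.

Section ArtinSchreier.
Variables (F : finFieldType) (p E n : nat).
Hypotheses (p_prime : prime p) (cardF : #|F| = (p ^ E)%N).

Definition artin_schreier (y : F) : F := y ^+ (p ^ n) - y.
Local Notation AS := artin_schreier.

Lemma artin_schreierD x y : AS (x + y) = AS x + AS y.
Proof.
have pF : p \in [pchar F] by apply: card_finPcharP cardF p_prime.
rewrite /AS exprDn_pchar; first by ring.
by rewrite pnatX (pnatE _ p_prime) pF.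
Qed.

Lemma nfib_artin_schreier t y0 : AS y0 = t -> nfib AS t = nfib AS 0.
Proof.
move=> <-; rewrite /nfib -(card_preimset _ (addIr y0)); apply: eq_card => y.
by rewrite !inE artin_schreierD -subr_eq0 addrK.
Qed.

Lemma nfib_artin_schreier_gt1 : (1 < nfib AS 0%R)%N.
Proof.
apply/card_gt1P; exists 0, 1; rewrite !inE /AS expr1n expr0n subrr.
by rewrite expn_eq0 eqn0Ngt prime_gt0 //= subrr [0 == 1]eq_sym oner_eq0.
Qed.

Lemma nfib_artin_schreier_dvd : (p %| nfib AS 0%R)%N.
Proof.
have : (nfib AS 0%R %| #|F|)%N.
  rewrite -(sum_nfib_inj AS (@inj_id F)); apply: dvdn_sum => t _.
  case: (pickP (fun y => AS y == t)) => [y0 /eqP/nfib_artin_schreier -> // | none].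
  by rewrite [nfib AS t]eq_card0 // => y; rewrite inE none.
rewrite cardF => /(dvdn_pfactor _ _ p_prime) [[|j] _ Ej].
  by have := nfib_artin_schreier_gt1; rewrite Ej.
by rewrite Ej expnS dvdn_mulr.
Qed.
End ArtinSchreier.

Lemma logn_le_pow p N E : prime p -> (0 < N)%N -> (N <= p ^ E)%N -> (logn p N <= E)%N.
Proof.
move=> p_prime N0 NE; rewrite -(leq_exp2l _ _ (prime_gt1 p_prime)).
exact: leq_trans (dvdn_leq N0 (pfactor_dvdnn p N)) NE.
Qed.

Lemma prime_ndvd_expnB p Q t : prime p -> (p %| Q)%N -> (0 < Q)%N -> (0 < t)%N ->
  ~~ (p %| Q ^ t - (Q - 1) ^ t)%N.
Proof.
move=> p_prime pQ Q0 t0; apply/negP => pD.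
have pQt : (p %| Q ^ t)%N by rewrite (dvdn_trans pQ) // dvdn_exp.
have : (p %| (Q - 1) ^ t)%N.
  by rewrite -(dvdn_subr _ pQt) // leq_exp2r ?leq_subr.
rewrite Euclid_dvdX // t0 andbT => pQ1.
by have := dvdn_sub pQ pQ1; rewrite subKn // dvdn1 => /eqP p1; rewrite p1 in p_prime.
Qed.

Lemma logn_eq_of_counts p E n0 k s N C D :
  prime p -> (p %| n0)%N -> (0 < n0)%N -> (0 < E)%N -> (0 < s)%N ->
  (N + C = (p ^ E) ^ k + n0 * C)%N -> (C * (p ^ E) ^ s = (p ^ E) ^ k * D)%N ->
  ~~ (p %| D)%N -> (logn p N + E * s = E * k)%N.
Proof.
move=> p_prime pn0 n0_gt0 E0 s0 NC CD pD; set Q := (p ^ E)%N in NC CD.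
have Q0 j : (0 < Q ^ j)%N by rewrite !expn_gt0 prime_gt0.
have eN : N = (Q ^ k + (n0 - 1) * C)%N.
  by apply/eqP; rewrite -(eqn_add2r C) NC mulnBl mul1n -addnA subnK // leq_pmull.
have eNQ : (N * Q ^ s = Q ^ k * (Q ^ s + (n0 - 1) * D))%N.
  by rewrite eN mulnDl -mulnA CD mulnDr mulnCA.
have pB : ~~ (p %| Q ^ s + (n0 - 1) * D)%N.
  have pQs : (p %| Q ^ s)%N by rewrite -expnM dvdn_exp // muln_gt0 E0.
  rewrite dvdn_addr // Euclid_dvdM // negb_or pD andbT; apply/negP => pn1.
  have := dvdn_sub pn0 pn1; rewrite subKn // dvdn1 => /eqP p1.
  by rewrite p1 in p_prime.
have N0 : (0 < N)%N by rewrite eN ltn_addr.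
have := congr1 (logn p) eNQ.
rewrite lognM // lognM ?ltn_addr // (@logn_coprime p (Q ^ s + _)); last first.
  by rewrite prime_coprime.
by rewrite -!expnM !pfactorK // addn0.
Qed.

Lemma Nfy_sum_nfib (F : finFieldType) p n k (f : {mpoly F[k]}) :
  @Nfy F k (p ^ n) f = (\sum_(x : {ffun 'I_k -> F}) nfib (artin_schreier p n) f.@[x])%N.
Proof.
rewrite /nfib; under eq_bigr do rewrite -sum1dep_card.
rewrite pair_big_dep sum1dep_card; apply: eq_card => -[x y].
by rewrite !inE eq_sym.
Qed.

Lemma mpoly_neq0_of_meval (F : fieldType) n (f : {mpoly F[n]}) v : f.@[v] != 0 -> f != 0.
Proof. by apply: contraNneq => ->; rewrite meval0. Qed.

Lemma dhomog_mpolyX (R : nzRingType) n (i : 'I_n) : ('X_i : {mpoly R[n]}) \is 1.-homog.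
Proof. by rewrite dhomogX /= mdeg1. Qed.

Section LeaderPolynomial.
Variables (F : finFieldType) (k d : nat).
Variables (A : {set 'I_k}) (S : 'I_k -> {set 'I_k}) (c : 'I_k -> 'I_k).
Hypothesis c_in : {in A, forall a, c a \in S a}.
Hypothesis leader_notin_S : {in A &, forall a b, b \notin S a}.
Hypothesis S_disjoint : {in A &, forall a b, a != b -> [disjoint S a & S b]}.
Local Notation X := {ffun 'I_k -> F}.

(* The power of the pivot [c a] pads the degree of [follower_monomial a] up to [d.-1]. *)
Definition follower_monomial (a : 'I_k) : {mpoly F[k]} :=
  (\prod_(l in S a) 'X_l) * 'X_(c a) ^+ (d.-1 - #|S a|).

Definition leader_poly : {mpoly F[k]} := \sum_(a in A) 'X_a * follower_monomial a.

Lemma leader_poly_homog : {in A, forall a, #|S a| < d}%N -> leader_poly \is d.-homog.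
Proof.
move=> S_small; apply: rpred_sum => a aA.
have -> : d = (1 + (#|S a| + 1 * (d.-1 - #|S a|)))%N.
  by have := S_small a aA; lia.
apply: dhomogM (dhomog_mpolyX _ a) (dhomogM _ (dhomogMn _ (dhomog_mpolyX _ _))).
rewrite -sum1_card; apply: (big_ind2 (fun m (q : {mpoly F[k]}) => q \is m.-homog)).
- exact: dhomog1.
- by move=> m q m' q'; apply: dhomogM.
- by move=> l _; apply: dhomog_mpolyX.
Qed.

Lemma meval_follower_monomial a (x : 'I_k -> F) :
  (follower_monomial a).@[x] = (\prod_(l in S a) x l) * x (c a) ^+ (d.-1 - #|S a|).
Proof.
rewrite /follower_monomial mevalM rmorph_prod rmorphXn /= mevalXU.
by congr (_ * _); apply: eq_bigr => l _; rewrite mevalXU.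
Qed.

Lemma meval_leader_poly (x : 'I_k -> F) :
  leader_poly.@[x] = \sum_(a in A) x a * (follower_monomial a).@[x].
Proof.
rewrite /leader_poly rmorph_sum /=; apply: eq_bigr => a _.
by rewrite mevalM mevalXU.
Qed.

Let R a (x : X) := (follower_monomial a).@[x].

Lemma follower_monomial_upd : {in A &, forall a b x y, R a (upd x b y) = R a x}.
Proof.
move=> a b aA bA x y; rewrite /R !meval_follower_monomial upd_other; last first.
  by apply: contraNneq (leader_notin_S aA bA) => <-; apply: c_in.
congr (_ * _); apply: eq_bigr => l lS; rewrite upd_other //.
by apply: contraNneq (leader_notin_S aA bA) => <-.
Qed.

Lemma follower_monomial_eq0 a x : a \in A ->
  (R a x == 0) = [exists l in S a, x l == 0].
Proof.
move=> aA; rewrite /R meval_follower_monomial mulf_eq0 expf_eq0.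
apply/orP/existsP => [[/prodf_eq0[l lS xl] | /andP[_ xc]] | [l /andP[lS xl]]].
- by exists l; rewrite lS.
- by exists (c a); rewrite c_in.
- by left; apply/prodf_eq0; exists l.
Qed.

Theorem logn_Nfy_leader_poly p E n :
  prime p -> #|F| = (p ^ E)%N -> (0 < E)%N -> A != set0 ->
  (logn p (@Nfy F k (p ^ n) leader_poly) + E * \sum_(a in A) #|S a| = E * k)%N.
Proof.
move=> p_prime cardF E0 /set0Pn[a0 a0A].
have NC := sum_nfib_leader_form (artin_schreier p n) follower_monomial_upd.
have S_disjoint' : {in enum A &, forall a b, a != b -> [disjoint S a & S b]}.
  by move=> a b; rewrite !mem_enum; apply: S_disjoint.
have := @card_blocks F k 0 _ (enum A) S predT (enum_uniq A) S_disjoint'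
  (fun _ l _ _ => @invariant_atT _ _ l).
rewrite !big_enum /= => CB.
have eC : #|[set x : X | all (fun a => [exists l in S a, x l == 0]) (enum A)]|
        = #|[set x | [forall a in A, R a x == 0]]|.
  apply: eq_card => x; rewrite !inE; apply/allP/forall_inP => H a aA.
    by rewrite follower_monomial_eq0 //; apply: H; rewrite mem_enum.
  by rewrite mem_enum in aA; rewrite -follower_monomial_eq0 //; apply: H.
have eT : #|[set _ : X | true]| = (#|F| ^ k)%N by rewrite cardsT card_ffun card_ord.
rewrite Nfy_sum_nfib.
have -> : (\sum_(x : X) nfib (artin_schreier p n) leader_poly.@[x]
           = \sum_x nfib (artin_schreier p n) (leader_form A R x))%N.
  by apply: eq_bigr => x _; rewrite meval_leader_poly.
rewrite eC eT cardF mulnC [in RHS]mulnC in CB; rewrite cardF in NC.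
apply: (logn_eq_of_counts p_prime _ _ E0 _ NC CB).
- exact: nfib_artin_schreier_dvd cardF.
- exact: ltnW (nfib_artin_schreier_gt1 _ _ p_prime).
- by rewrite (bigD1 a0) //= ltn_addr // card_gt0; apply/set0Pn; exists (c a0); apply: c_in.
apply: (big_ind (fun m => ~~ (p %| m)%N)) => [|m1 m2|a aA].
- by rewrite dvdn1 neq_ltn prime_gt1 ?orbT.
- by rewrite Euclid_dvdM // negb_or => -> ->.
apply: prime_ndvd_expnB => //.
- by rewrite dvdn_exp.
- by rewrite expn_gt0 prime_gt0.
- by rewrite card_gt0; apply/set0Pn; exists (c a); apply: c_in.
Qed.

Lemma leader_poly_neq0 : A != set0 -> leader_poly != 0.
Proof.
case/set0Pn=> a aA; pose one : X := [ffun => 1].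
suff [x fx] : exists x : X, leader_form A R x != 0.
  by apply: (@mpoly_neq0_of_meval _ _ _ x); rewrite meval_leader_poly.
have R1 : R a one = 1.
  by rewrite /R meval_follower_monomial big1 => [|l _]; rewrite ffunE ?expr1n ?mulr1.
case: (eqVneq (leader_form A R one) 0) => [f0|]; last by exists one.
exists (upd one a 0).
rewrite (leader_form_upd follower_monomial_upd) // f0 R1 ffunE.
by rewrite add0r sub0r mulr1 oppr_eq0 oner_eq0.
Qed.
End LeaderPolynomial.

Section ConsecutiveBlocks.
Variables (k d : nat).
Hypothesis d_gt1 : (1 < d)%N.
Let d_gt0 : (0 < d)%N := ltnW d_gt1.

Definition block_start (l : 'I_k) : 'I_k :=
  Ordinal (leq_ltn_trans (leq_divM l d) (ltn_ord l)).

Definition non_starts : {set 'I_k} := [set l : 'I_k | (l %% d != 0)%N].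
Definition block_leaders : {set 'I_k} := block_start @: non_starts.
Definition block_followers (a : 'I_k) : {set 'I_k} :=
  [set l in non_starts | block_start l == a].
Definition block_pivot (a : 'I_k) : 'I_k := odflt a [pick l in block_followers a].

Lemma block_pivot_in : {in block_leaders, forall a, block_pivot a \in block_followers a}.
Proof.
move=> _ /imsetP[l lN ->]; rewrite /block_pivot; case: pickP => [//|/(_ l)].
by rewrite inE lN eqxx.
Qed.

Lemma block_leader_notin :
  {in block_leaders &, forall a b, b \notin block_followers a}.
Proof.
move=> a _ _ /imsetP[l _ ->]; rewrite !inE negb_and; apply/orP; left.
by rewrite /= modnMl.
Qed.

Lemma block_followers_disjoint a b :
  a != b -> [disjoint block_followers a & block_followers b].
Proof.
move=> ab; rewrite -setI_eq0; apply/eqP/setP => l; rewrite !inE; apply/negbTE.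
by apply: contra ab => /andP[/andP[_ /eqP <-] /andP[_ /eqP <-]].
Qed.

Lemma card_block_followers a : (#|block_followers a| < d)%N.
Proof.
pose h (l : 'I_k) : 'I_d := Ordinal (ltn_pmod l d_gt0).
have h_inj : {in block_followers a &, injective h}.
  move=> l l'; rewrite !inE => /andP[_ /eqP la] /andP[_ /eqP la'] /(congr1 val) /= E.
  have /(congr1 val) /= E' := etrans la (esym la').
  by apply: val_inj; rewrite /= (divn_eq l d) (divn_eq l' d) E E'.
rewrite -(card_in_imset h_inj).
have /subset_leq_card : h @: block_followers a \subset [set~ Ordinal d_gt0].
  apply/subsetP => y /imsetP[l]; rewrite !inE => /andP[lN _] ->.
  by apply: contra lN => /eqP/(congr1 val) /= ->.
by rewrite cardsC1 card_ord => /leq_ltn_trans; apply; rewrite ltn_predL.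
Qed.

Lemma sum_card_block_followers :
  (\sum_(a in block_leaders) #|block_followers a| = #|non_starts|)%N.
Proof.
rewrite -sum1_card [RHS](partition_big block_start (mem block_leaders)) => [|l lN].
  by apply: eq_bigr => a _; rewrite -sum1_card; apply: eq_bigl => l; rewrite !inE.
exact: imset_f.
Qed.

Lemma leq_ceildiv : (k <= ceildiv k d * d)%N.
Proof.
rewrite /ceildiv; have := divn_eq (k + d - 1) d; have := ltn_pmod (k + d - 1) d_gt0.
lia.
Qed.

Lemma leq_non_starts_ceildiv : (k <= #|non_starts| + ceildiv k d)%N.
Proof.
rewrite -{1}(card_ord k) -(cardsC non_starts) leq_add2l.
have lt_c (l : 'I_k) : (l %/ d < ceildiv k d)%N.
  by rewrite ltn_divLR //; apply: leq_trans leq_ceildiv.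
pose h (l : 'I_k) : 'I_(ceildiv k d) := Ordinal (lt_c l).
have h_inj : {in ~: non_starts &, injective h}.
  move=> l l'; rewrite !inE !negbK => /eqP l0 /eqP l'0 /(congr1 val) /= E.
  by apply: val_inj; rewrite /= (divn_eq l d) (divn_eq l' d) l0 l'0 E.
by rewrite -(card_in_imset h_inj); apply: leq_trans (max_card _) _; rewrite card_ord.
Qed.

Lemma block_leaders_neq0 : (1 < k)%N -> block_leaders != set0.
Proof.
move=> k_gt1; apply/set0Pn; exists (block_start (Ordinal k_gt1)).
by apply: imset_f; rewrite inE /= modn_small.
Qed.

Theorem logn_Nfy_block_poly (F : finFieldType) p E n :
  prime p -> #|F| = (p ^ E)%N -> (0 < E)%N -> (1 < k)%N ->
  (logn p (@Nfy F k (p ^ n) (leader_poly F d block_leaders block_followers block_pivot))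
   <= E * ceildiv k d)%N.
Proof.
move=> p_prime cardF E0 k_gt1.
have := logn_Nfy_leader_poly (F := F) d block_pivot_in block_leader_notin
  (fun a b _ _ => block_followers_disjoint (a := a) (b := b)) n p_prime cardF E0
  (block_leaders_neq0 k_gt1).
rewrite sum_card_block_followers => eq_logn.
have := leq_non_starts_ceildiv; rewrite -(leq_pmul2l E0) mulnDr -eq_logn.
by rewrite addnC leq_add2l.
Qed.
End ConsecutiveBlocks.

Lemma logn_Nfy_X (F : finFieldType) p E n k (i : 'I_k) : prime p -> #|F| = (p ^ E)%N ->
  logn p (@Nfy F k (p ^ n) 'X_i) = (E * k)%N.
Proof.
move=> p_prime cardF; rewrite Nfy_sum_nfib.
under eq_bigr do rewrite mevalXU.
by rewrite sum_nfib_coord cardF -expnM pfactorK.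
Qed.

Lemma Nfy_scaled_power (F : finFieldType) p n d (c : F) :
  @Nfy F 1 (p ^ n) (c *: 'X_ord0 ^+ d)
  = (\sum_(z : F) nfib (artin_schreier p n) (c * z ^+ d)%R)%N.
Proof.
rewrite Nfy_sum_nfib (reindex (fun z : F => [ffun=> z])) /=; last first.
  exists (fun x => x ord0) => [z _|x _]; first by rewrite ffunE.
  by apply/ffunP => i; rewrite ffunE (ord1 i).
by apply: eq_bigr => z _; rewrite mevalZ rmorphXn /= mevalXU ffunE.
Qed.

Lemma sum_Nfy_scaled_power (F : finFieldType) p n d : (0 < d)%N ->
  (\sum_(c : F | c != 0%R) @Nfy F 1 (p ^ n) (c *: 'X_ord0 ^+ d) = (#|F| - 1) * #|F|)%N.
Proof.
move=> d_gt0; pose AS := artin_schreier (F := F) p n.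
have n0_le : (nfib AS 0%R <= #|F|)%N by apply: max_card.
under eq_bigr do rewrite Nfy_scaled_power.
rewrite exchange_big /=; under eq_bigr do rewrite sum_nfib_scale expf_eq0 d_gt0.
rewrite (bigD1 0) //= eqxx (eq_bigr (fun _ => #|F| - nfib AS 0%R)%N) => [|z /negPf -> //].
by rewrite sum_nat_const card_neq -mulnDr subnKC.
Qed.

Lemma exists_scaled_power_Nfy_le (F : finFieldType) p E n d :
  prime p -> #|F| = (p ^ E)%N -> (0 < d)%N ->
  exists2 c : F, c != 0 & (logn p (@Nfy F 1 (p ^ n) (c *: 'X_ord0 ^+ d)) <= E)%N.
Proof.
move=> p_prime cardF d_gt0.
have [c /andP[c0 Nc]] :
    exists c : F, (c != 0) && (@Nfy F 1 (p ^ n) (c *: 'X_ord0 ^+ d) <= #|F|)%N.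
  apply/existsP; apply: contraT; rewrite negb_exists => /forallP none.
  have : (\sum_(c : F | c != 0%R) #|F|.+1
          <= \sum_(c : F | c != 0%R) @Nfy F 1 (p ^ n) (c *: 'X_ord0 ^+ d))%N.
    by apply: leq_sum => c c0; move: (none c); rewrite c0 /= -ltnNge.
  rewrite sum_Nfy_scaled_power // sum_nat_const card_neq.
  by rewrite leq_mul2l subn_eq0 leqNgt finNzRing_gt1 ltnn.
exists c => //; apply: logn_le_pow => //; last by rewrite -cardF.
rewrite Nfy_scaled_power (bigD1 0) //= expr0n eqn0Ngt d_gt0 mulr0 ltn_addr //.
exact: ltnW (nfib_artin_schreier_gt1 _ _ p_prime).
Qed.

Theorem proposition5p2 (p e m k d : nat) (F : finFieldType) :
  prime p -> (0 < e)%N -> (0 < m)%N -> (0 < k)%N ->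
  #|F| = ((p ^ e) ^ m)%N ->
  (0 < d)%N -> (d <= k * ((p ^ e) ^ m - 1))%N ->
  exists f : {mpoly F[k]},
    [/\ f != 0, f \is d.-homog &
        (logn p (@Nfy F k (p ^ e)%N f) <= e * m * ceildiv k d)%N].
Proof.
move=> p_prime e_gt0 m_gt0 k_gt0 cardF d_gt0 _.
have {}cardF : #|F| = (p ^ (e * m))%N by rewrite cardF expnM.
have em_gt0 : (0 < e * m)%N by rewrite muln_gt0 e_gt0.
case: k k_gt0 => // k _; case: d d_gt0 => [//|[|d]] _.
  exists 'X_ord0; split.
  - by apply: (@mpoly_neq0_of_meval _ _ _ (fun=> 1)); rewrite mevalXU oner_eq0.
  - exact: dhomog_mpolyX.
  - by rewrite (logn_Nfy_X _ _ p_prime cardF) /ceildiv addnK divn1.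
case: k => [|k].
  have [c c0 Nc] := exists_scaled_power_Nfy_le e (F := F) p_prime cardF (isT : 0 < d.+2)%N.
  exists (c *: 'X_ord0 ^+ d.+2); split; last by rewrite /ceildiv addKn divnn muln1.
  - apply: (@mpoly_neq0_of_meval _ _ _ (fun=> 1)).
    by rewrite mevalZ rmorphXn /= mevalXU expr1n mulr1.
  - by apply: dhomogZ; have := dhomogMn d.+2 (dhomog_mpolyX F (ord0 : 'I_1)); rewrite mul1n.
exists (leader_poly F d.+2 (block_leaders k.+2 d.+2) (block_followers d.+2)
                   (block_pivot d.+2)).
split; last exact: logn_Nfy_block_poly.
- by apply: leader_poly_neq0; [apply: block_pivot_in | apply: block_leader_notin |
     apply: block_leaders_neq0].
- by apply: leader_poly_homog => a _; apply: card_block_followers.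
Qed.
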